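(* Let $E$ be a Fréchet space, $E^*$ its topological dual with the weak$^*$ topology, $J=[a,b]$ with $a<b$, and $f:J\to E^*$ continuous. Then $$\int_a^b f(t)(\mu'(t))\,dt=0$$ for every $\mu\in C^1(J,E)$ with $\mu(a)=\mu(b)=0$ if and only if $f$ is constant on $J$.
   Context: $C^1(J,E)$ denotes continuously differentiable curves $J\to E$ (one-sided derivatives at the endpoints). The integrals are ordinary Lebesgue integrals of continuous real functions; integrals of $E^*$-valued continuous functions are understood in the weak sense: $\int_a^b f\,dt$ is the element $l\in E^*$ with $l(e)=\int_a^b f(t)(e)\,dt$ for all $e\in E$. *)

From Stdlib Require Import Reals Lra ClassicalEpsilon ClassicalDescription.
Open Scope R_scope.

(* A Frechet space over R: a real vector space with a countable separating
   family of seminorms (p_n), complete for the induced (metrizable, locally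
   convex) topology: every sequence that is Cauchy for every p_n converges
   for every p_n. *)
Record FrechetSpace := {
  fs_car :> Type;
  fs_zero : fs_car;
  fs_add : fs_car -> fs_car -> fs_car;
  fs_opp : fs_car -> fs_car;
  fs_scal : R -> fs_car -> fs_car;
  fs_add_assoc : forall x y z, fs_add x (fs_add y z) = fs_add (fs_add x y) z;
  fs_add_comm : forall x y, fs_add x y = fs_add y x;
  fs_add_zero : forall x, fs_add x fs_zero = x;
  fs_add_opp : forall x, fs_add x (fs_opp x) = fs_zero;
  fs_scal_assoc : forall c d x, fs_scal c (fs_scal d x) = fs_scal (c * d) x;
  fs_scal_one : forall x, fs_scal 1 x = x;
  fs_scal_distr_l : forall c x y, fs_scal c (fs_add x y) = fs_add (fs_scal c x) (fs_scal c y);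
  fs_scal_distr_r : forall c d x, fs_scal (c + d) x = fs_add (fs_scal c x) (fs_scal d x);
  fs_sn : nat -> fs_car -> R;
  fs_sn_nonneg : forall n x, 0 <= fs_sn n x;
  fs_sn_triangle : forall n x y, fs_sn n (fs_add x y) <= fs_sn n x + fs_sn n y;
  fs_sn_homog : forall n c x, fs_sn n (fs_scal c x) = Rabs c * fs_sn n x;
  fs_sn_sep : forall x, (forall n, fs_sn n x = 0) -> x = fs_zero;
  fs_complete : forall u : nat -> fs_car,
    (forall n eps, eps > 0 -> exists N, forall i j, (i >= N)%nat -> (j >= N)%nat ->
        fs_sn n (fs_add (u i) (fs_opp (u j))) < eps) ->
    exists x, forall n eps, eps > 0 -> exists N, forall i, (i >= N)%nat ->
        fs_sn n (fs_add (u i) (fs_opp x)) < eps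
}.

Arguments fs_zero {f}.
Arguments fs_add {f}.
Arguments fs_opp {f}.
Arguments fs_scal {f}.
Arguments fs_sn {f}.

Definition fs_sub {E : FrechetSpace} (x y : E) : E := fs_add x (fs_opp y).

Definition fs_continuous (E : FrechetSpace) (g : E -> R) : Prop :=
  forall x eps, eps > 0 -> exists (N : nat) (delta : R), delta > 0 /\
    forall y, (forall n, (n <= N)%nat -> fs_sn n (fs_sub y x) < delta) ->
      Rabs (g y - g x) < eps.

Definition is_linear (E : FrechetSpace) (l : E -> R) : Prop :=
  (forall x y, l (fs_add x y) = l x + l y) /\
  (forall c x, l (fs_scal c x) = c * l x).

Definition in_dual (E : FrechetSpace) (l : E -> R) : Prop :=
  is_linear E l /\ fs_continuous E l.

(* f : J -> E^* is continuous for the weak-* topology: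
   t |-> f t e is continuous on J = [a,b] for every e. *)
Definition weak_star_continuous_on (E : FrechetSpace) (f : R -> E -> R) (a b : R) : Prop :=
  forall (e : E) t, a <= t <= b -> forall eps, eps > 0 -> exists delta, delta > 0 /\
    forall s, a <= s <= b -> Rabs (s - t) < delta -> Rabs (f s e - f t e) < eps.

(* mu' is the derivative of mu on J = [a,b] (one-sided at the endpoints),
   in the topology of E. *)
Definition has_derivative_on (E : FrechetSpace) (mu mu' : R -> E) (a b : R) : Prop :=
  forall t, a <= t <= b -> forall n eps, eps > 0 -> exists delta, delta > 0 /\
    forall s, a <= s <= b -> s <> t -> Rabs (s - t) < delta ->
      fs_sn n (fs_sub (fs_scal (/ (s - t)) (fs_sub (mu s) (mu t))) (mu' t)) < eps.

Definition curve_continuous_on (E : FrechetSpace) (nu : R -> E) (a b : R) : Prop :=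
  forall t, a <= t <= b -> forall n eps, eps > 0 -> exists delta, delta > 0 /\
    forall s, a <= s <= b -> Rabs (s - t) < delta -> fs_sn n (fs_sub (nu s) (nu t)) < eps.

Definition is_C1_on (E : FrechetSpace) (mu mu' : R -> E) (a b : R) : Prop :=
  has_derivative_on E mu mu' a b /\ curve_continuous_on E mu' a b.

(* Total Riemann integral: the Riemann integral when g is Riemann integrable
   on [a,b] (value independent of the proof), 0 otherwise. *)
Definition Rint (g : R -> R) (a b : R) : R :=
  match excluded_middle_informative (inhabited (Riemann_integrable g a b)) with
  | left H => RiemannInt (epsilon H (fun _ => True))
  | right _ => 0
  end.

(* If f is constantly l, then t |-> f t (mu' t) is the derivative of l o mu, so its
   integral is l (mu b) - l (mu a) = 0.  Conversely, fix e, put g t := f t e and let c be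
   the mean of g on [a, b].  The curve t |-> (RInt g a t - c (t - a)) e vanishes at a and
   b and has derivative (g - c) e, so the hypothesis gives RInt ((g - c) g) = 0, hence
   RInt ((g - c)^2) = 0 and g = c on [a, b]. *)

From Pilot Require Import Defs.
From Stdlib Require Import Reals Lra Lia ClassicalDescription.
From Coquelicot Require Import Coquelicot.
Open Scope R_scope.

Definition Rcontinuous_on (g : R -> R) (a b : R) : Prop :=
  forall t, a <= t <= b -> forall eps, eps > 0 -> exists delta, delta > 0 /\
    forall s, a <= s <= b -> Rabs (s - t) < delta -> Rabs (g s - g t) < eps.

Definition Rderivative_on (G g : R -> R) (a b : R) : Prop :=
  forall t, a <= t <= b -> forall eps, eps > 0 -> exists delta, delta > 0 /\
    forall s, a <= s <= b -> Rabs (s - t) < delta ->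
      Rabs (G s - G t - g t * (s - t)) <= eps * Rabs (s - t).

Definition clamp (a b x : R) : R := Rmax a (Rmin b x).

Lemma clamp_in a b x : a <= b -> a <= clamp a b x <= b.
Proof. intro. unfold clamp, Rmax, Rmin. repeat destruct Rle_dec; lra. Qed.

Lemma clamp_id a b x : a <= x <= b -> clamp a b x = x.
Proof. intro. unfold clamp, Rmax, Rmin. repeat destruct Rle_dec; lra. Qed.

Lemma clamp_dist a b x y : a <= b -> Rabs (clamp a b y - clamp a b x) <= Rabs (y - x).
Proof.
  intro. unfold clamp, Rmax, Rmin, Rabs.
  repeat destruct Rle_dec; repeat destruct Rcase_abs; lra.
Qed.

Lemma continuity_pt_clamp (g : R -> R) a b : a <= b -> Rcontinuous_on g a b ->
  forall x, continuity_pt (fun t => g (clamp a b t)) x.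
Proof.
  intros Hab Hg x eps Heps.
  destruct (Hg (clamp a b x) (clamp_in a b x Hab) eps Heps) as [d [Hd K]].
  exists d; split; [lra|]. intros y [_ Hy]. simpl in *. unfold R_dist in *.
  apply K; [apply clamp_in; lra|]. pose proof (clamp_dist a b x y Hab). lra.
Qed.

Lemma Rderivative_on_continuous (G g : R -> R) a b :
  Rderivative_on G g a b -> Rcontinuous_on G a b.
Proof.
  intros HG t Ht eps Heps.
  destruct (HG t Ht 1 ltac:(lra)) as [d [Hd K]].
  set (L := Rabs (g t) + 1).
  assert (HL : 0 < L) by (unfold L; pose proof (Rabs_pos (g t)); lra).
  exists (Rmin d (eps / L)).
  split; [apply Rmin_glb_lt; [lra | apply Rdiv_lt_0_compat; lra]|].
  intros s Hs Hst. pose proof (Rmin_l d (eps / L)). pose proof (Rmin_r d (eps / L)).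
  assert (Hlip : Rabs (G s - G t) <= L * Rabs (s - t)).
  { specialize (K s Hs ltac:(lra)).
    pose proof (Rabs_triang (G s - G t - g t * (s - t)) (g t * (s - t))) as T.
    rewrite Rabs_mult in T.
    replace (G s - G t - g t * (s - t) + g t * (s - t)) with (G s - G t) in T by ring.
    unfold L; lra. }
  assert (L * Rabs (s - t) < eps).
  { apply (Rmult_lt_compat_l L) in Hst; [|lra].
    assert (L * Rmin d (eps / L) <= L * (eps / L)) by (apply Rmult_le_compat_l; lra).
    replace (L * (eps / L)) with eps in * by (field; lra). lra. }
  lra.
Qed.

Lemma derivable_pt_lim_clamp (G g : R -> R) a b x : Rderivative_on G g a b -> a < x < b ->
  derivable_pt_lim (fun t => G (clamp a b t)) x (g x).
Proof.
  intros HG Hx eps Heps.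
  destruct (HG x ltac:(lra) (eps / 2) ltac:(lra)) as [d [Hd K]].
  assert (Hm : 0 < Rmin d (Rmin (x - a) (b - x)))
    by (repeat apply Rmin_glb_lt; lra).
  exists (mkposreal _ Hm). intros h Hh0 Hh; simpl in Hh.
  pose proof (Rmin_l d (Rmin (x - a) (b - x))).
  pose proof (Rmin_r d (Rmin (x - a) (b - x))).
  pose proof (Rmin_l (x - a) (b - x)). pose proof (Rmin_r (x - a) (b - x)).
  assert (Hxh : a <= x + h <= b) by (unfold Rabs in Hh; destruct Rcase_abs; lra).
  rewrite (clamp_id a b x), (clamp_id a b (x + h)) by lra.
  specialize (K (x + h) Hxh). replace (x + h - x) with h in K by ring.
  specialize (K ltac:(lra)).
  replace ((G (x + h) - G x) / h - g x) with ((G (x + h) - G x - g x * h) / h) by (field; auto).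
  unfold Rdiv. rewrite Rabs_mult, Rabs_inv.
  apply (Rmult_le_compat_r (/ Rabs h)) in K; [|left; apply Rinv_0_lt_compat, Rabs_pos_lt; auto].
  rewrite Rmult_assoc, Rinv_r in K by (apply Rabs_no_R0; auto). lra.
Qed.

Lemma ex_RInt_continuity_pt (k : R -> R) a b : (forall x, continuity_pt k x) -> ex_RInt k a b.
Proof.
  intro Hk. apply (ex_RInt_continuous (V := R_CompleteNormedModule)).
  intros; apply continuity_pt_filterlim; auto.
Qed.

Lemma derivable_pt_lim_RInt (k : R -> R) a : (forall x, continuity_pt k x) ->
  forall x, derivable_pt_lim (fun u => RInt k a u) x (k x).
Proof.
  intros Hk x. apply is_derive_Reals, (is_derive_RInt k _ a).
  - apply filter_forall. intro u.
    apply (RInt_correct (V := R_CompleteNormedModule)), ex_RInt_continuity_pt; auto.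
  - apply continuity_pt_filterlim; auto.
Qed.

(* The fundamental theorem of calculus with one-sided derivatives at the endpoints:
   extending [g] and [G] constantly outside [a, b] makes the mean value theorem
   applicable to [u |-> RInt g a u - G u]. *)
Lemma is_RInt_Rderivative_on (G g : R -> R) a b : a < b ->
  Rcontinuous_on g a b -> Rderivative_on G g a b -> is_RInt g a b (G b - G a).
Proof.
  intros Hab Hg HG.
  set (k := fun t => g (clamp a b t)).
  assert (Hk : forall x, continuity_pt k x) by (apply continuity_pt_clamp; auto; lra).
  assert (Hkg : forall x, a <= x <= b -> k x = g x)
    by (intros; unfold k; rewrite clamp_id; auto).
  set (psi := fun u => RInt k a u - G (clamp a b u)).
  destruct (MVT_gen psi a b (fun _ => 0)) as [c [_ Hc]].
  - rewrite Rmin_left, Rmax_right by lra. intros x Hx. apply is_derive_Reals.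
    replace 0 with (k x - g x) by (rewrite Hkg; lra).
    apply derivable_pt_lim_minus.
    + apply derivable_pt_lim_RInt; auto.
    + apply (derivable_pt_lim_clamp G); auto.
  - intros x _. apply continuity_pt_minus.
    + apply derivable_continuous_pt. eexists. apply derivable_pt_lim_RInt; auto.
    + apply continuity_pt_clamp; [lra|]. apply (Rderivative_on_continuous G g); auto.
  - unfold psi in Hc. rewrite RInt_point, !clamp_id in Hc by lra.
    change (zero : R) with 0 in Hc.
    apply (is_RInt_ext k); [rewrite Rmin_left, Rmax_right by lra; intros; apply Hkg; lra|].
    replace (G b - G a) with (RInt k a b) by lra.
    apply (RInt_correct (V := R_CompleteNormedModule)), ex_RInt_continuity_pt; auto.
Qed.

Lemma derivable_pt_lim_const_on (Q : R -> R) c a b x l : a < b ->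
  (forall u, a <= u <= b -> Q u = c) -> a <= x <= b -> derivable_pt_lim Q x l -> l = 0.
Proof.
  intros Hab HQ Hx HQl. destruct (Req_dec l 0) as [|Hl]; auto. exfalso.
  destruct (HQl (Rabs l / 2)) as [d Hd]; [apply Rdiv_lt_0_compat; [apply Rabs_pos_lt|]; lra|].
  pose proof (cond_pos d) as Hd0.
  set (m := Rmin (d / 2) ((b - a) / 2)).
  assert (Hm : 0 < m) by (apply Rmin_glb_lt; lra).
  assert (Hmd : m < d) by (pose proof (Rmin_l (d / 2) ((b - a) / 2)); unfold m; lra).
  assert (Hmab : m <= (b - a) / 2) by apply Rmin_r.
  set (h := if Rle_dec x ((a + b) / 2) then m else - m).
  assert (Hh : h <> 0 /\ Rabs h < d /\ a <= x + h <= b).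
  { unfold h; destruct Rle_dec; [rewrite Rabs_right | rewrite Rabs_left]; repeat split; lra. }
  destruct Hh as [Hh0 [Hhd Hxh]].
  specialize (Hd h Hh0 Hhd). rewrite (HQ x), (HQ (x + h)) in Hd by auto.
  replace ((c - c) / h - l) with (- l) in Hd by (field; auto).
  rewrite Rabs_Ropp in Hd. pose proof (Rabs_pos_lt l Hl). lra.
Qed.

Lemma continuous_nonneg_RInt_eq0 (k : R -> R) a b : a < b ->
  (forall x, continuity_pt k x) -> (forall x, a <= x <= b -> 0 <= k x) ->
  RInt k a b = 0 -> forall x, a <= x <= b -> k x = 0.
Proof.
  intros Hab Hk Hpos H0 x Hx.
  assert (Hex : forall u v, ex_RInt k u v) by (intros; apply ex_RInt_continuity_pt; auto).
  apply (derivable_pt_lim_const_on (fun u => RInt k a u) 0 a b x); auto.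
  - intros u Hu. pose proof (RInt_Chasles k a u b (Hex _ _) (Hex _ _)) as Ch.
    change (plus (RInt k a u) (RInt k u b)) with (RInt k a u + RInt k u b) in Ch.
    assert (0 <= RInt k a u) by (apply RInt_ge_0; [lra | apply Hex | intros; apply Hpos; lra]).
    assert (0 <= RInt k u b) by (apply RInt_ge_0; [lra | apply Hex | intros; apply Hpos; lra]).
    lra.
  - apply derivable_pt_lim_RInt; auto.
Qed.

(* Du Bois-Reymond: [k - c] is orthogonal to constants, [c] being the mean of [k]. *)
Lemma const_of_RInt_dev_mul_eq0 (k : R -> R) a b : a < b -> (forall x, continuity_pt k x) ->
  RInt (fun x => (k x - RInt k a b / (b - a)) * k x) a b = 0 ->
  forall x, a <= x <= b -> k x = RInt k a b / (b - a).
Proof.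
  intros Hab Hk Horth. set (c := RInt k a b / (b - a)) in *.
  assert (Hdev : forall x, continuity_pt (fun u => k u - c) x).
  { intro x. apply continuity_pt_minus; auto. apply continuity_pt_const. intros ? ?; reflexivity. }
  assert (Imean : RInt (fun x => k x - c) a b = 0).
  { rewrite (RInt_minus (V := R_CompleteNormedModule) k (fun _ => c));
      [| apply ex_RInt_continuity_pt; auto | apply ex_RInt_const].
    rewrite RInt_const. unfold c, minus, plus, opp, scal; simpl.
    unfold mult; simpl. field. lra. }
  assert (Isq : RInt (fun x => (k x - c) * (k x - c)) a b = 0).
  { rewrite <- (RInt_ext (fun x => minus ((k x - c) * k x) (scal c (k x - c))))
      by (intros; unfold minus, plus, opp, scal; simpl; unfold mult; simpl; ring).
    rewrite (RInt_minus (V := R_CompleteNormedModule)), (RInt_scal (V := R_CompleteNormedModule)),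
      Horth, Imean.
    - unfold minus, plus, opp, scal; simpl; unfold mult; simpl; ring.
    - apply ex_RInt_continuity_pt; auto.
    - apply ex_RInt_continuity_pt. intro; apply continuity_pt_mult; auto.
    - apply (ex_RInt_scal (V := R_CompleteNormedModule)), ex_RInt_continuity_pt; auto. }
  intros x Hx.
  assert (Hsq0 : (k x - c) * (k x - c) = 0).
  { apply (continuous_nonneg_RInt_eq0 (fun u => (k u - c) * (k u - c)) a b); auto.
    - intro; apply continuity_pt_mult; auto.
    - intros; apply Rle_0_sqr. }
  nra.
Qed.

Lemma Rint_is_RInt (h : R -> R) a b I : is_RInt h a b I -> Rint h a b = I.
Proof.
  intro H. unfold Rint. destruct excluded_middle_informative as [Hi|Hn].
  - rewrite <- RInt_Reals. apply is_RInt_unique; auto.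
  - exfalso. apply Hn. constructor. apply ex_RInt_Reals_0. exists I; auto.
Qed.

Lemma ex_delta_forall_le (P : nat -> R -> Prop) :
  (forall n, exists d, d > 0 /\ P n d) ->
  (forall n d d', 0 < d' <= d -> P n d -> P n d') ->
  forall N, exists d, d > 0 /\ forall n, (n <= N)%nat -> P n d.
Proof.
  intros H M N. induction N as [|N [d1 [Hd1 P1]]].
  - destruct (H 0%nat) as [d [Hd Pd]]. exists d; split; auto.
    intros n Hn. replace n with 0%nat by lia. auto.
  - destruct (H (S N)) as [d2 [Hd2 P2]].
    assert (Hm : 0 < Rmin d1 d2) by (apply Rmin_glb_lt; auto).
    pose proof (Rmin_l d1 d2). pose proof (Rmin_r d1 d2).
    exists (Rmin d1 d2). split; [lra|]. intros n Hn.
    destruct (Nat.eq_dec n (S N)) as [->|Hne].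
    + apply (M _ d2); [lra | auto].
    + apply (M _ d1); [lra | apply P1; lia].
Qed.

Section Frechet.
Variable E : FrechetSpace.

Lemma fs_scal0 (e : E) : fs_scal 0 e = fs_zero.
Proof.
  set (z := fs_scal 0 e).
  assert (Hzz : fs_add z z = z) by (unfold z; rewrite <- fs_scal_distr_r, Rplus_0_r; reflexivity).
  transitivity (fs_add (fs_add z z) (fs_opp z)).
  - rewrite <- fs_add_assoc, fs_add_opp, fs_add_zero. reflexivity.
  - rewrite Hzz, fs_add_opp. reflexivity.
Qed.

Lemma fs_opp_unique (x y : E) : fs_add x y = fs_zero -> fs_opp x = y.
Proof.
  intro H. rewrite <- (fs_add_zero E (fs_opp x)), <- H, fs_add_assoc.
  rewrite (fs_add_comm E (fs_opp x) x), fs_add_opp, fs_add_comm, fs_add_zero. reflexivity.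
Qed.

Lemma fs_sub_scal (r s : R) (e : E) : fs_sub (fs_scal r e) (fs_scal s e) = fs_scal (r - s) e.
Proof.
  unfold fs_sub. rewrite (fs_opp_unique (fs_scal s e) (fs_scal (- s) e)).
  - rewrite <- fs_scal_distr_r. reflexivity.
  - rewrite <- fs_scal_distr_r, Rplus_opp_r. apply fs_scal0.
Qed.

Lemma fs_sn_scal_lt n r (e : E) eps : eps > 0 -> Rabs r < eps / (fs_sn n e + 1) ->
  fs_sn n (fs_scal r e) < eps.
Proof.
  intros Heps Hr. rewrite fs_sn_homog. pose proof (fs_sn_nonneg E n e). pose proof (Rabs_pos r).
  apply (Rmult_lt_compat_r (fs_sn n e + 1)) in Hr; [|lra].
  unfold Rdiv in Hr. rewrite Rmult_assoc, Rinv_l in Hr by lra. nra.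
Qed.

Lemma is_linear_zero (l : E -> R) : Defs.is_linear E l -> l fs_zero = 0.
Proof. intros [Hadd _]. pose proof (Hadd fs_zero fs_zero) as H. rewrite fs_add_zero in H. lra. Qed.

Lemma is_linear_sub (l : E -> R) x y : Defs.is_linear E l -> l (fs_sub x y) = l x - l y.
Proof.
  intros Hl. pose proof (is_linear_zero l Hl) as H0. destruct Hl as [Hadd _]. unfold fs_sub.
  pose proof (Hadd y (fs_opp y)) as Hy. rewrite fs_add_opp, H0 in Hy.
  rewrite Hadd. lra.
Qed.

(* Continuity of [l] only involves finitely many seminorms, so it transports the
   seminorm-wise convergence of [y s] to [x] (as [s] tends to [t] within [Q]). *)
Lemma fs_continuous_lim (l : E -> R) (Q : R -> Prop) (y : R -> E) (x : E) (t : R) :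
  fs_continuous E l ->
  (forall n eps, eps > 0 -> exists delta, delta > 0 /\
     forall s, Q s -> Rabs (s - t) < delta -> fs_sn n (fs_sub (y s) x) < eps) ->
  forall eps, eps > 0 -> exists delta, delta > 0 /\
    forall s, Q s -> Rabs (s - t) < delta -> Rabs (l (y s) - l x) < eps.
Proof.
  intros Hl Hy eps Heps. destruct (Hl x eps Heps) as [N [dc [Hdc Kc]]].
  destruct (ex_delta_forall_le (fun n d => forall s, Q s -> Rabs (s - t) < d ->
              fs_sn n (fs_sub (y s) x) < dc)) with (N := N) as [d [Hd K]].
  - intro n. apply Hy; auto.
  - intros n d d' Hd' P s Hs Hst. apply P; auto; lra.
  - exists d; split; [exact Hd|]. intros s Hs Hst. apply Kc. intros n Hn. apply K; auto.
Qed.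

Lemma Rcontinuous_on_dual_comp (l : E -> R) (nu : R -> E) a b :
  fs_continuous E l -> curve_continuous_on E nu a b -> Rcontinuous_on (fun t => l (nu t)) a b.
Proof.
  intros Hl Hnu t Ht.
  apply (fs_continuous_lim l (fun s => a <= s <= b) nu (nu t) t Hl (Hnu t Ht)).
Qed.

Lemma Rderivative_on_dual_comp (l : E -> R) (mu mu' : R -> E) a b :
  in_dual E l -> has_derivative_on E mu mu' a b ->
  Rderivative_on (fun t => l (mu t)) (fun t => l (mu' t)) a b.
Proof.
  intros [Hlin Hl] Hmu t Ht eps Heps.
  destruct (fs_continuous_lim l (fun s => a <= s <= b /\ s <> t)
              (fun s => fs_scal (/ (s - t)) (fs_sub (mu s) (mu t))) (mu' t) t Hl)
    with (eps := eps) as [d [Hd K]]; auto.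
  { intros n eps' Heps'. destruct (Hmu t Ht n eps' Heps') as [d [Hd K]].
    exists d; split; auto. intros s [Hs Hne]. auto. }
  exists d; split; auto. intros s Hs Hst.
  destruct (Req_dec s t) as [->|Hne].
  { rewrite !Rminus_diag, Rmult_0_r, Rminus_0_r, Rabs_R0. lra. }
  specialize (K s (conj Hs Hne) Hst).
  destruct Hlin as [Hadd Hscal]. rewrite Hscal, is_linear_sub in K by (split; auto).
  replace (l (mu s) - l (mu t) - l (mu' t) * (s - t))
    with ((s - t) * (/ (s - t) * (l (mu s) - l (mu t)) - l (mu' t))) by (field; lra).
  rewrite Rabs_mult, Rmult_comm. apply Rmult_le_compat_r; [apply Rabs_pos | lra].
Qed.

Lemma is_RInt_dual_derivative (l : E -> R) (mu mu' : R -> E) a b : a < b ->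
  in_dual E l -> is_C1_on E mu mu' a b ->
  is_RInt (fun t => l (mu' t)) a b (l (mu b) - l (mu a)).
Proof.
  intros Hab Hl [Hmu Hmu'].
  apply (is_RInt_Rderivative_on (fun t => l (mu t))); auto.
  - apply Rcontinuous_on_dual_comp; auto. apply Hl.
  - apply Rderivative_on_dual_comp; auto.
Qed.

Lemma is_C1_on_scal (phi dphi : R -> R) (e : E) a b :
  (forall x, derivable_pt_lim phi x (dphi x)) -> (forall x, continuity_pt dphi x) ->
  is_C1_on E (fun u => fs_scal (phi u) e) (fun u => fs_scal (dphi u) e) a b.
Proof.
  intros Hphi Hdphi.
  assert (Hq : forall n eps, eps > 0 -> eps / (fs_sn n e + 1) > 0).
  { intros n eps Heps. pose proof (fs_sn_nonneg E n e). apply Rdiv_lt_0_compat; lra. }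
  split.
  - intros t _ n eps Heps.
    destruct (Hphi t _ (Hq n eps Heps)) as [d Hd].
    exists d; split; [apply cond_pos|]. intros s _ Hne Hst.
    rewrite fs_sub_scal, fs_scal_assoc, fs_sub_scal.
    apply fs_sn_scal_lt; auto.
    specialize (Hd (s - t) ltac:(lra) Hst). replace (t + (s - t)) with s in Hd by ring.
    replace (/ (s - t) * (phi s - phi t)) with ((phi s - phi t) / (s - t)) by (field; lra).
    auto.
  - intros t _ n eps Heps.
    destruct (Hdphi t _ (Hq n eps Heps)) as [d [Hd K]].
    exists d; split; auto. intros s _ Hst.
    rewrite fs_sub_scal. apply fs_sn_scal_lt; auto.
    destruct (Req_dec s t) as [->|Hne].
    + rewrite Rminus_diag, Rabs_R0. apply Hq; auto.
    + apply (K s). split; [split; auto; exact I | exact Hst].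
Qed.

End Frechet.

Lemma RInt_dev_mul_eq0_of_test_curves (E : FrechetSpace) (a b : R) (f : R -> E -> R)
  (Hab : a < b) (Hdual : forall t, a <= t <= b -> in_dual E (f t))
  (Htest : forall mu mu' : R -> E, is_C1_on E mu mu' a b ->
     mu a = fs_zero -> mu b = fs_zero -> Rint (fun t => f t (mu' t)) a b = 0)
  (e : E) (g : R -> R) :
  (forall x, continuity_pt g x) -> (forall x, a <= x <= b -> g x = f x e) ->
  RInt (fun x => (g x - RInt g a b / (b - a)) * g x) a b = 0.
Proof.
  intros Hg Hgf. set (c := RInt g a b / (b - a)).
  set (phi := fun u => RInt g a u - c * (u - a)).
  assert (Hphi : forall x, derivable_pt_lim phi x (g x - c)).
  { intro x. replace (g x - c) with (g x - c * (1 - 0)) by ring.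
    apply derivable_pt_lim_minus; [apply derivable_pt_lim_RInt; auto|].
    apply (derivable_pt_lim_scal (fun u => u - a)), derivable_pt_lim_minus;
      [apply derivable_pt_lim_id | apply derivable_pt_lim_const]. }
  assert (Hdev : forall x, continuity_pt (fun u => g u - c) x).
  { intro x. apply continuity_pt_minus; auto. apply continuity_pt_const. intros ? ?; reflexivity. }
  assert (Hphia : phi a = 0) by (unfold phi; rewrite RInt_point; change (zero : R) with 0; ring).
  assert (Hphib : phi b = 0) by (unfold phi, c; field; lra).
  pose proof (Htest _ _ (is_C1_on_scal E phi (fun u => g u - c) e a b Hphi Hdev)) as T.
  simpl in T. rewrite Hphia, Hphib, fs_scal0 in T. rewrite <- (T eq_refl eq_refl).
  symmetry. apply Rint_is_RInt, (is_RInt_ext (fun x => (g x - c) * g x)).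
  - rewrite Rmin_left, Rmax_right by lra. intros x Hx.
    destruct (Hdual x ltac:(lra)) as [[_ Hscal] _]. rewrite Hscal, Hgf by lra. reflexivity.
  - apply (RInt_correct (V := R_CompleteNormedModule)), ex_RInt_continuity_pt.
    intro; apply continuity_pt_mult; auto.
Qed.

Theorem lemma2 (E : FrechetSpace) (a b : R) (f : R -> E -> R)
  (Hab : a < b)
  (Hdual : forall t, a <= t <= b -> in_dual E (f t))
  (Hcont : weak_star_continuous_on E f a b) :
  (forall mu mu' : R -> E, is_C1_on E mu mu' a b ->
     mu a = fs_zero -> mu b = fs_zero ->
     Rint (fun t => f t (mu' t)) a b = 0)
  <->
  (forall s t, a <= s <= b -> a <= t <= b -> forall e : E, f s e = f t e).
Proof.
  split.
  - intros Htest s t Hs Ht e.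
    set (g := fun u => f (clamp a b u) e).
    assert (Hg : forall x, continuity_pt g x)
      by (apply (continuity_pt_clamp (fun u => f u e)); [lra | exact (Hcont e)]).
    assert (Hgf : forall x, a <= x <= b -> g x = f x e)
      by (intros; unfold g; rewrite clamp_id; auto).
    pose proof (const_of_RInt_dev_mul_eq0 g a b Hab Hg
      (RInt_dev_mul_eq0_of_test_curves E a b f Hab Hdual Htest e g Hg Hgf)) as Hconst.
    rewrite <- (Hgf s Hs), <- (Hgf t Ht), (Hconst s Hs), (Hconst t Ht). reflexivity.
  - intros Hconst mu mu' Hmu Ha Hb.
    assert (Haa : a <= a <= b) by lra.
    apply Rint_is_RInt, (is_RInt_ext (fun t => f a (mu' t))).
    + rewrite Rmin_left, Rmax_right by lra. intros t Ht. apply Hconst; lra.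
    + replace 0 with (f a (mu b) - f a (mu a))
        by (rewrite Ha, Hb, is_linear_zero by apply (Hdual a Haa); ring).
      apply is_RInt_dual_derivative; auto.
Qed.
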